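(* Let $\mathbb{K}$ be a field, $n>1$, $a=\sum_{j=0}^d c_j s^j\in\mathbb{K}[s]^n$ a non-zero row vector of degree $d$, and $A\in\mathbb{K}^{(2d+1)\times n(d+1)}$ the matrix whose $(i,\,kn+r)$ entry ($1\le i\le 2d+1$, $0\le k\le d$, $1\le r\le n$) is the $r$-th entry of $c_{i-1-k}$ (zero if $i-1-k\notin\{0,\dots,d\}$). With $\tilde q$ and $b_r$ as in the context, $\mathrm{syz}(a)=\langle b_r^\flat\mid r\in\tilde q\rangle_{\mathbb{K}[s]}$.
   Context: A column of a matrix is pivotal if it is either the first column and non-zero, or linearly independent of all previous columns; otherwise non-pivotal. $p$ is the set of pivotal indices of $A$, $q$ the set of non-pivotal indices, and $\tilde q=\{\min\varrho\mid\varrho\in q/(n)\}$ the set of basic non-pivotal indices (minimal elements of the classes of $q$ modulo $n$). For $i\in q$ write uniquely $A_{*i}=\sum_{\{j\in p\mid j<i\}}\alpha^{(i)}_jA_{*j}$ ($A_{*j}$ the $j$-th column) and set $b_i=e_i-\sum_{\{j\in p\mid j<i\}}\alpha^{(i)}_je_j\in\mathbb{K}^{n(d+1)}$, $e_i$ the standard basis vectors. For $v\in\mathbb{K}^{n(d+1)}$ in blocks $v=[w_0;\dots;w_d]$ with $w_i\in\mathbb{K}^n$, $v^\flat=\sum_{i=0}^d s^i w_i\in\mathbb{K}[s]^n$. $\mathrm{syz}(a)=\{h\in\mathbb{K}[s]^n\mid a\,h=0\}$. *)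

From HB Require Import structures.
From mathcomp Require Import all_boot all_order all_algebra.
Set Implicit Arguments. Unset Strict Implicit. Unset Printing Implicit Defensive.
Import Order.TTheory GRing.Theory Num.Theory.
Local Open Scope ring_scope.

(* Indices are 0-based: row i in [0,2d], column j = k*n + r, k in [0,d], r in [0,n-1].
   Entry (i, k*n+r) is the coefficient of s^(i-k) in a_r (0 if k > i; coefficients
   beyond the degree d are 0 automatically). *)
Definition coefmx (K : fieldType) (n d : nat) (a : 'rV[{poly K}]_n)
  : 'M[K]_((2 * d).+1, n * d.+1) :=
  \matrix_(i, j) (if (j %/ n <= i)%N
                  then \sum_(r < n | val r == (j %% n)%N) (a 0 r)`_(i - j %/ n)
                  else 0).

Definition prev_span (K : fieldType) (m N : nat) (A : 'M[K]_(m, N)) (j : 'I_N)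
  : 'M[K]_m :=
  (\sum_(k < N | (k < j)%N) <<(col k A)^T>>)%MS.

Definition pivotal (K : fieldType) (m N : nat) (A : 'M[K]_(m, N)) (j : 'I_N) : bool :=
  ~~ ((col j A)^T <= prev_span A j)%MS.

Definition basic_nonpivotal (K : fieldType) (n m N : nat) (A : 'M[K]_(m, N))
  (j : 'I_N) : bool :=
  ~~ pivotal A j &&
  [forall k : 'I_N, (~~ pivotal A k && (k %% n == j %% n)%N) ==> (j <= k)%N].

Definition evec (K : fieldType) (N : nat) (i : 'I_N) : 'cV[K]_N := delta_mx i 0.

Definition bvec (K : fieldType) (m N : nat) (A : 'M[K]_(m, N))
  (alpha : 'I_N -> 'I_N -> K) (i : 'I_N) : 'cV[K]_N :=
  @evec K N i - \sum_(j < N | pivotal A j && (j < i)%N) alpha i j *: @evec K N j.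

(* v^flat = sum_k s^k w_k, where w_k is the k-th block of length n *)
Definition flat (K : fieldType) (n N : nat) (v : 'cV[K]_N) : 'cV[{poly K}]_n :=
  \col_(r < n) \sum_(j < N | (j %% n == r)%N) (v j 0)%:P * 'X^(j %/ n).

From HB Require Import structures.
From mathcomp Require Import all_boot all_order all_algebra zify.
Import Order.TTheory GRing.Theory Num.Theory.
Set Implicit Arguments. Unset Strict Implicit. Unset Printing Implicit Defensive.
Local Open Scope ring_scope.

(* Since the coefficients of a have degree at most d, the entries of index at
   most 2d of a * v^flat are exactly the entries of A v, so v |-> v^flat maps
   the kernel of A onto the syzygies of degree at most d.  Such a syzygy lies in
   the span of the b_r^flat: the last non-zero entry L of its coefficient vector
   is non-pivotal; if r is the basic non-pivotal index congruent to L mod n and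
   L = r + e n, then s^e b_r^flat is a syzygy of degree at most d whose
   coefficient vector has its last non-zero entry 1 at L, and subtracting it
   lets us induct on L.  An arbitrary syzygy h is brought to degree at most d
   with the Koszul syzygies a_rho e_i - a_i e_rho, rho of maximal degree d:
   reducing each h_i (i <> rho) modulo a_rho leaves entries of degree < d off
   rho, and then a h = 0 forces deg h_rho <= d as well. *)

Lemma modn_divn_eqE (n k r j : nat) : (r < n)%N ->
  ((j %% n == r) && (j %/ n == k))%N = (j == k * n + r)%N.
Proof.
move=> lt_rn; have n_gt0 : (0 < n)%N by apply: leq_ltn_trans lt_rn.
apply/andP/eqP => [[/eqP <- /eqP <-] | ->]; first exact: divn_eq.
by rewrite modnMDl divnMDl // modn_small // divn_small // addn0 !eqxx.
Qed.

Lemma leq_divn_ord (n d : nat) (j : 'I_(n * d.+1)) : (0 < n)%N -> (j %/ n <= d)%N.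
Proof. by move=> n_gt0; rewrite -ltnS ltn_divLR // [(_ * n)%N]mulnC. Qed.

Lemma ltn_block_index (n d k r : nat) :
  (r < n)%N -> (k <= d)%N -> (k * n + r < n * d.+1)%N.
Proof.
move=> lt_rn le_kd; apply: (@leq_trans (k * n + n)); first by rewrite ltn_add2l.
by rewrite -mulSnr mulnC leq_mul2l ltnS le_kd orbT.
Qed.

Section Flat.

Variables (K : fieldType) (n N : nat).
Implicit Types v w : 'cV[K]_N.

Lemma flat_coef v (r : 'I_n) k :
  (flat n v r 0)`_k = \sum_(j < N | (j %% n == r)%N && (j %/ n == k)%N) v j 0.
Proof.
rewrite mxE coef_sum big_mkcondr /=; apply: eq_bigr => j _.
by rewrite coefCM coefXn eq_sym; case: eqP => _; rewrite ?mulr1 ?mulr0.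
Qed.

Lemma flat_coef_ord v (r : 'I_n) k (lt_kN : (k * n + r < N)%N) :
  (flat n v r 0)`_k = v (Ordinal lt_kN) 0.
Proof.
rewrite flat_coef (eq_bigl (pred1 (Ordinal lt_kN))) ?big_pred1_eq // => j /=.
by rewrite modn_divn_eqE // -val_eqE.
Qed.

Lemma flat_coef_out v (r : 'I_n) k : (N <= k * n + r)%N -> (flat n v r 0)`_k = 0.
Proof.
move=> le_Nk; rewrite flat_coef big1 // => j.
rewrite modn_divn_eqE // => /eqP eq_jk.
by have := ltn_ord j; rewrite eq_jk ltnNge le_Nk.
Qed.

Lemma flatD v w : flat n (v + w) = flat n v + flat n w.
Proof.
apply/matrixP => i j; rewrite !mxE -big_split /=; apply: eq_bigr => k _.
by rewrite !mxE polyCD mulrDl.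
Qed.

Lemma flatZ c v : flat n (c *: v) = c%:P *: flat n v.
Proof.
apply/matrixP => i j; rewrite !mxE mulr_sumr; apply: eq_bigr => k _.
by rewrite !mxE polyCM mulrA.
Qed.

Lemma flat0 : flat n (0 : 'cV[K]_N) = 0.
Proof. by rewrite -(scale0r (0 : 'cV[K]_N)) flatZ scale0r. Qed.

End Flat.

Definition unflat (K : fieldType) (n N : nat) (h : 'cV[{poly K}]_n) : 'cV[K]_N :=
  \col_(j < N) \sum_(r < n | val r == (j %% n)%N) (h r 0)`_(j %/ n).

Lemma unflat_coef (K : fieldType) (n N : nat) (h : 'cV[{poly K}]_n) (j : 'I_N)
    (n_gt0 : (0 < n)%N) :
  unflat N h j 0 = (h (Ordinal (ltn_pmod j n_gt0)) 0)`_(j %/ n).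
Proof.
by rewrite mxE (big_pred1 (Ordinal (ltn_pmod j n_gt0))) // => r; rewrite /= -val_eqE.
Qed.

Lemma flat_unflat (K : fieldType) (n d : nat) (h : 'cV[{poly K}]_n) :
  (0 < n)%N -> (forall r, size (h r 0%R) <= d.+1)%N -> flat n (unflat (n * d.+1) h) = h.
Proof.
move=> n_gt0 size_h; apply/matrixP => r j; rewrite ord1; apply/polyP => k.
have [le_kd|lt_dk] := leqP k d; last first.
  rewrite flat_coef_out; first by rewrite nth_default // (leq_trans (size_h r)).
  by apply: leq_trans (leq_addr _ _); rewrite mulnC leq_mul2r lt_dk orbT.
rewrite (flat_coef_ord _ (ltn_block_index (ltn_ord r) le_kd)) unflat_coef /=.
have -> : Ordinal (ltn_pmod (Ordinal (ltn_block_index (ltn_ord r) le_kd)) n_gt0) = r.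
  by apply: val_inj; rewrite /= modnMDl modn_small.
by rewrite divnMDl // divn_small // addn0.
Qed.

Section CoefficientMatrix.

Variables (K : fieldType) (n d : nat) (a : 'rV[{poly K}]_n).

Lemma coef_mulmx_flat N (v : 'cV[K]_N) i :
  ((a *m flat n v) 0 0)`_i = \sum_(j < N) v j 0 *
     (if (j %/ n <= i)%N then \sum_(r < n | val r == (j %% n)%N) (a 0 r)`_(i - j %/ n)
      else 0).
Proof.
rewrite mxE coef_sum.
transitivity (\sum_(r < n) \sum_(j < N | (j %% n == r)%N)
   v j 0 * (if (j %/ n <= i)%N then (a 0 r)`_(i - j %/ n) else 0)).
  apply: eq_bigr => r _; rewrite mxE mulr_sumr coef_sum; apply: eq_bigr => j _.
  by rewrite mulrCA coefCM coefMXn; case: leqP.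
rewrite (exchange_big_dep xpredT) //=; apply: eq_bigr => j _.
case: (j %/ n <= i)%N; last by rewrite mulr0 big1 // => r _; rewrite mulr0.
by rewrite mulr_sumr; apply: eq_bigl => r; rewrite eq_sym.
Qed.

Lemma coefmx_mulmx (v : 'cV[K]_(n * d.+1)) i :
  (coefmx d a *m v) i 0 = ((a *m flat n v) 0 0)`_i.
Proof. by rewrite coef_mulmx_flat mxE; apply: eq_bigr => j _; rewrite mxE mulrC. Qed.

Hypotheses (n_gt0 : (0 < n)%N) (size_a : forall r, (size (a 0%R r) <= d.+1)%N).

Lemma syz_flatE (v : 'cV[K]_(n * d.+1)) :
  a *m flat n v = 0 <-> coefmx d a *m v = 0.
Proof.
split => [av0 | Av0].
  by apply/matrixP => i j; rewrite ord1 coefmx_mulmx av0 !mxE coef0.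
apply/matrixP => i j; rewrite !ord1 [RHS]mxE; apply/polyP => k; rewrite coef0.
have [lt_k2d|le_2dk] := ltnP k (2 * d).+1.
  by rewrite -(coefmx_mulmx _ (Ordinal lt_k2d)) Av0 mxE.
rewrite coef_mulmx_flat big1 // => l _; case: ifP => _; last by rewrite mulr0.
rewrite big1 ?mulr0 // => r _; rewrite nth_default // (leq_trans (size_a r)) //.
by have := leq_divn_ord l n_gt0; lia.
Qed.

End CoefficientMatrix.

Section Kernel.

Variables (K : fieldType) (m N : nat) (A : 'M[K]_(m, N)).

Lemma kernel_last_nonpivotal (v : 'cV[K]_N) (L : 'I_N) :
  A *m v = 0 -> v L 0 != 0 -> (forall j : 'I_N, (L < j)%N -> v j 0 = 0) ->
  ~~ pivotal A L.
Proof.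
move=> Av vL0 v_gt; rewrite negbK -(eqmx_scale _ vL0).
have : \sum_j v j 0 *: (col j A)^T = 0.
  transitivity (A *m v)^T; last by rewrite Av trmx0.
  by rewrite trmx_mul mulmx_sum_row; apply: eq_bigr => j _; rewrite tr_col mxE.
rewrite (bigID (fun j : 'I_N => j < L)%N) /= addrC (bigD1 L) ?ltnn //= big1 ?addr0.
  move/eqP; rewrite addr_eq0 => /eqP ->; rewrite eqmx_opp.
  apply: summx_sub => j lt_jL; apply/scalemx_sub/(sumsmx_sup j) => //.
  by rewrite genmxE.
move=> j /andP [ge_jL ne_jL].
by rewrite v_gt ?scale0r // ltn_neqAle eq_sym ne_jL leqNgt.
Qed.

Lemma basic_nonpivotal_le n (L : 'I_N) : ~~ pivotal A L ->
  exists2 r : 'I_N, basic_nonpivotal n A r & (r <= L)%N && (r %% n == L %% n)%N.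
Proof.
move=> npL; pose P j := ~~ pivotal A j && (j %% n == L %% n)%N.
have PL : P L by rewrite /P npL eqxx.
case: (arg_minnP (fun j : 'I_N => val j) PL) => r /andP [npr eq_rL] min_r.
exists r; last by rewrite min_r.
rewrite /basic_nonpivotal npr; apply/forallP => k; apply/implyP => /andP [npk eq_k].
by apply: min_r; rewrite /P npk (eqP eq_k).
Qed.

Variable alpha : 'I_N -> 'I_N -> K.

Lemma bvec_coef (r j : 'I_N) : (r <= j)%N -> bvec A alpha r j 0 = (j == r)%:R.
Proof.
move=> le_rj; rewrite !mxE summxE big1 ?subr0 ?andbT // => i /andP [_ lt_ir].
rewrite !mxE andbT.
suff /negbTE -> : j != i by rewrite mulr0.
by rewrite -(inj_eq val_inj) /= neq_ltn (leq_trans lt_ir le_rj) orbT.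
Qed.

Lemma mulmx_bvec (r : 'I_N) :
  col r A = \sum_(j < N | pivotal A j && (j < r)%N) alpha r j *: col j A ->
  A *m bvec A alpha r = 0.
Proof.
move=> decomp; rewrite mulmxBr mulmx_sumr /evec -colE decomp; apply/eqP.
by rewrite subr_eq0; apply/eqP/eq_bigr => j _; rewrite -scalemxAr -colE.
Qed.

Variable n : nat.

Definition bspan (h : 'cV[{poly K}]_n) : Prop :=
  exists p : 'I_N -> {poly K},
    h = \sum_(r < N | basic_nonpivotal n A r) p r *: flat n (bvec A alpha r).

Lemma bspan0 : bspan 0.
Proof. by exists (fun _ => 0); rewrite big1 // => r _; rewrite scale0r. Qed.

Lemma bspanD h1 h2 : bspan h1 -> bspan h2 -> bspan (h1 + h2).
Proof.
move=> [p1 ->] [p2 ->]; exists (fun r => p1 r + p2 r).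
by rewrite -big_split; apply: eq_bigr => r _; rewrite scalerDl.
Qed.

Lemma bspanZ c h : bspan h -> bspan (c *: h).
Proof.
move=> [p ->]; exists (fun r => c * p r).
by rewrite scaler_sumr; apply: eq_bigr => r _; rewrite scalerA.
Qed.

Lemma bspan_sum (I : finType) (P : pred I) (F : I -> 'cV[{poly K}]_n) :
  (forall i, P i -> bspan (F i)) -> bspan (\sum_(i | P i) F i).
Proof. by move=> spanF; apply: big_ind => //; [exact: bspan0 | exact: bspanD]. Qed.

Lemma bspan_bflat c r : basic_nonpivotal n A r -> bspan (c *: flat n (bvec A alpha r)).
Proof.
move=> br; exists (fun r' => if r' == r then c else 0).
rewrite (bigD1 r) //= eqxx big1 ?addr0 // => r' /andP [_ /negbTE ->].
by rewrite scale0r.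
Qed.

Lemma coef_shift_bflat (r : 'I_N) e (i : 'I_n) k : (r + e * n <= k * n + i)%N ->
  ('X^e * flat n (bvec A alpha r) i 0)`_k = (k * n + i == r + e * n)%N%:R.
Proof.
move=> le_rk; rewrite coefXnM; case: ltnP => [lt_ke | le_ek].
  by have := ltn_ord i; nia.
have shift_idx : (k * n + i = (k - e) * n + i + e * n)%N by rewrite mulnBl; nia.
rewrite shift_idx eqn_add2r; have [lt_N | le_N] := ltnP ((k - e) * n + i) N.
  by rewrite flat_coef_ord bvec_coef // -(leq_add2r (e * n)) -shift_idx.
rewrite flat_coef_out //; case: eqP => // eq_r.
by move: (ltn_ord r); rewrite -eq_r ltnNge le_N.
Qed.

End Kernel.

Section Syzygy.

Variables (K : fieldType) (n d : nat) (a : 'rV[{poly K}]_n).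
Variable alpha : 'I_(n * d.+1) -> 'I_(n * d.+1) -> K.

Local Notation N := (n * d.+1)%N.
Local Notation A := (coefmx d a).

Hypotheses (n_gt0 : (0 < n)%N) (size_a : forall r, (size (a 0%R r) <= d.+1)%N).
Hypothesis nonpivotal_decomp : forall i : 'I_N, ~~ pivotal A i ->
  col i A = \sum_(j < N | pivotal A j && (j < i)%N) alpha i j *: col j A.

Lemma syz_bflat (r : 'I_N) : ~~ pivotal A r -> a *m flat n (bvec A alpha r) = 0.
Proof. by move=> npr; apply/syz_flatE/mulmx_bvec/nonpivotal_decomp. Qed.

Lemma bspan_syz h : bspan A alpha h -> a *m h = 0.
Proof.
move=> [p ->]; rewrite mulmx_sumr big1 // => r /andP [npr _].
by rewrite -scalemxAr syz_bflat ?scaler0.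
Qed.

Lemma kernel_lead_step (L : 'I_N) : ~~ pivotal A L ->
  exists w : 'cV[K]_N, [/\ A *m w = 0, bspan A alpha (flat n w),
    w L 0 = 1 & forall j : 'I_N, (L < j)%N -> w j 0 = 0].
Proof.
move=> npL; have [r br /andP [le_rL /eqP eq_rL]] := basic_nonpivotal_le n npL.
have [e eq_L] : exists e, L = (r + e * n)%N :> nat.
  exists (L %/ n - r %/ n)%N; rewrite mulnBl.
  have : (r %/ n * n <= L %/ n * n)%N by rewrite leq_mul2r leq_div2r ?orbT.
  have := divn_eq L n; have := divn_eq r n; rewrite eq_rL; lia.
pose w := unflat N ('X^e *: flat n (bvec A alpha r)).
have w_coef (j : 'I_N) : (L <= j)%N -> w j 0 = (j == L :> nat)%:R.
  by move=> le_Lj; rewrite unflat_coef mxE coef_shift_bflat /= -divn_eq -eq_L.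
have size_w i : (size (('X^e *: flat n (bvec A alpha r)) i 0%R) <= d.+1)%N.
  apply/leq_sizeP => k le_dk.
  have lt_Lk : (L < k * n + i)%N.
    apply: leq_trans (ltn_ord L) (leq_trans _ (leq_addr _ _)).
    by rewrite mulnC leq_mul2r le_dk orbT.
  by rewrite mxE coef_shift_bflat -eq_L ?(ltnW lt_Lk) // gtn_eqF.
have flat_w : flat n w = 'X^e *: flat n (bvec A alpha r) by exact: flat_unflat.
exists w; split.
- apply/syz_flatE => //; rewrite flat_w -scalemxAr syz_bflat ?scaler0 //.
  by case/andP: br.
- by rewrite flat_w; exact: bspan_bflat.
- by rewrite w_coef ?eqxx.
- by move=> j lt_Lj; rewrite w_coef ?(ltnW lt_Lj) // gtn_eqF.
Qed.

Lemma bspan_kernel v : A *m v = 0 -> bspan A alpha (flat n v).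
Proof.
suff bounded B : forall u : 'cV[K]_N, (forall j : 'I_N, (B <= j)%N -> u j 0 = 0) ->
    A *m u = 0 -> bspan A alpha (flat n u).
  by apply: (bounded N) => j; rewrite leqNgt ltn_ord.
elim: B => [|B IH] u u_ge Au.
  have -> : u = 0 by apply/matrixP => i j; rewrite ord1 u_ge // mxE.
  by rewrite flat0; exact: bspan0.
have [lt_BN|le_NB] := ltnP B N; last first.
  by apply: IH => // j le_Bj; have := ltn_ord j; rewrite ltnNge (leq_trans le_NB le_Bj).
pose L := Ordinal lt_BN; have u_gt (j : 'I_N) : (L < j)%N -> u j 0 = 0 by exact: u_ge.
have u_ge_eq (j : 'I_N) : (B <= j)%N -> j = L \/ (L < j)%N.
  by rewrite leq_eqVlt => /orP [/eqP eq_Bj|]; [left; apply: val_inj | right].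
have [uL0|uL] := eqVneq (u L 0) 0.
  by apply: IH => // j /u_ge_eq [->|/u_gt].
have [w [Aw span_w wL w_gt]] := kernel_lead_step (kernel_last_nonpivotal Au uL u_gt).
rewrite -(subrK (u L 0 *: w) u) flatD flatZ; apply: bspanD; last exact: bspanZ.
apply: IH; last by rewrite mulmxBr -scalemxAr Aw scaler0 Au subr0.
move=> j /u_ge_eq [->|lt_Lj]; first by rewrite !mxE wL mulr1 subrr.
by rewrite !mxE (u_gt j lt_Lj) (w_gt j lt_Lj) mulr0 subr0.
Qed.

Lemma bspan_syz_small g : a *m g = 0 -> (forall r, size (g r 0%R) <= d.+1)%N ->
  bspan A alpha g.
Proof.
move=> ag size_g; rewrite -(flat_unflat n_gt0 size_g); apply: bspan_kernel.
by apply/syz_flatE => //; rewrite flat_unflat.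
Qed.

End Syzygy.

Section Koszul.

Variables (R : comPzRingType) (n : nat) (a : 'rV[R]_n).

Definition koszul (rho i : 'I_n) : 'cV[R]_n :=
  a 0 rho *: delta_mx i 0 - a 0 i *: delta_mx rho 0.

Lemma koszul_syz rho i : a *m koszul rho i = 0.
Proof.
rewrite mulmxBr -!scalemxAr -!colE.
by apply/matrixP => x y; rewrite !ord1 !mxE mulrC subrr.
Qed.

Lemma koszul_entry rho i k :
  koszul rho i k 0 = a 0 rho * (k == i)%:R - a 0 i * (k == rho)%:R.
Proof. by rewrite !mxE !andbT. Qed.

End Koszul.

Lemma size_koszul (R : comNzRingType) n (a : 'rV[{poly R}]_n) m rho i k :
  (forall r, size (a 0%R r) <= m)%N -> (size (koszul a rho i k 0%R) <= m)%N.
Proof.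
move=> size_a; rewrite koszul_entry.
apply: leq_trans (size_polyD _ _) _; rewrite size_polyN geq_max.
by apply/andP; split; case: eqP => _; rewrite ?mulr1 ?mulr0 ?size_poly0.
Qed.

Lemma koszul_reduce_entry (K : fieldType) n (a : 'rV[{poly K}]_n)
    (h : 'cV[{poly K}]_n) (rho k : 'I_n) : k != rho ->
  (h - \sum_(i | i != rho) (h i 0 %/ a 0 rho) *: koszul a rho i) k 0 = h k 0 %% a 0 rho.
Proof.
move=> ne_k; rewrite 2!mxE summxE (bigD1 k) //= big1 ?addr0.
  rewrite mxE koszul_entry eqxx (negbTE ne_k) mulr1 mulr0 subr0.
  by rewrite {1}(divp_eq (h k 0) (a 0 rho)) mulrC addrC addKr.
move=> i /andP [_ ne_ik]; rewrite mxE koszul_entry eq_sym (negbTE ne_ik).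
by rewrite (negbTE ne_k) !mulr0 subr0 mulr0.
Qed.

Lemma size_syz_at_max (R : idomainType) n d (a : 'rV[{poly R}]_n)
    (g : 'cV[{poly R}]_n) (rho : 'I_n) :
  a *m g = 0 -> size (a 0 rho) = d.+1 -> (forall k, size (a 0%R k) <= d.+1)%N ->
  (forall k, k != rho -> size (g k 0%R) <= d)%N -> (size (g rho 0%R) <= d)%N.
Proof.
move=> ag size_rho size_a size_g.
have lead_eq : a 0 rho * g rho 0 = - \sum_(k | k != rho) a 0 k * g k 0.
  apply/eqP; rewrite -addr_eq0.
  rewrite -(bigD1 rho (P := xpredT) (F := fun k => a 0 k * g k 0)) //.
  by have := congr1 (fun M : 'M_1 => M 0 0) ag; rewrite !mxE => ->.
have : (size (a 0 rho * g rho 0)%R <= 2 * d)%N.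
  rewrite lead_eq size_polyN.
  apply: (big_ind (fun p : {poly R} => size p <= 2 * d)%N); first by rewrite size_poly0.
    by move=> p q size_p size_q; rewrite (leq_trans (size_polyD _ _)) // geq_max size_p.
  move=> k ne_k; apply: leq_trans (size_polyMleq _ _) _.
  by have := size_g k ne_k; have := size_a k; lia.
have [->|g0] := eqVneq (g rho 0) 0; first by rewrite size_poly0.
have a0 : a 0 rho != 0 by rewrite -size_poly_eq0 size_rho.
by rewrite size_mul // size_rho addSn; lia.
Qed.

Unset Implicit Arguments.
Set Strict Implicit.

Theorem lemma9 (K : fieldType) (n d : nat) (a : 'rV[{poly K}]_n)
  (alpha : 'I_(n * d.+1) -> 'I_(n * d.+1) -> K) :
  (1 < n)%N -> a != 0 -> \max_(r < n) size (a 0%R r) = d.+1 :> nat ->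
  (forall i : 'I_(n * d.+1), ~~ pivotal (coefmx d a) i ->
     col i (coefmx d a) =
     \sum_(j < n * d.+1 | pivotal (coefmx d a) j && (j < i)%N)
        alpha i j *: col j (coefmx d a)) ->
  forall h : 'cV[{poly K}]_n,
    a *m h = 0 <->
    exists p : 'I_(n * d.+1) -> {poly K},
      h = \sum_(r < n * d.+1 | basic_nonpivotal n (coefmx d a) r)
            p r *: flat n (bvec (coefmx d a) alpha r).
Proof.
(* a != 0 is implied by the degree hypothesis. *)
move=> n_gt1 _ max_size decomp h; have n_gt0 := ltnW n_gt1.
have size_a r : (size (a 0%R r) <= d.+1)%N by rewrite -max_size (leq_bigmax r).
split=> [ah | span_h]; last exact: (bspan_syz n_gt0 size_a decomp).
have card_gt0 : (0 < #|'I_n|)%N by rewrite card_ord.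
have [rho max_rho] := bigop.eq_bigmax (fun r : 'I_n => size (a 0 r)) card_gt0.
have size_rho : size (a 0 rho) = d.+1 by rewrite -max_rho.
pose c i := (h i 0 %/ a 0 rho) *: koszul a rho i.
pose h' := h - \sum_(i | i != rho) c i.
have ah' : a *m h' = 0.
  rewrite mulmxBr ah mulmx_sumr big1 ?subr0 // => i _.
  by rewrite -scalemxAr koszul_syz scaler0.
have size_h'_off k : k != rho -> (size (h' k 0%R) <= d)%N.
  move=> ne_k; rewrite koszul_reduce_entry // -ltnS -size_rho ltn_modp.
  by rewrite -size_poly_eq0 size_rho.
have size_h' k : (size (h' k 0%R) <= d.+1)%N.
  have [->|ne_k] := eqVneq k rho; last exact/leqW/size_h'_off.
  exact/leqW/(size_syz_at_max ah' size_rho size_a size_h'_off).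
rewrite -(subrK (\sum_(i | i != rho) c i) h) -/h'.
have span_small := bspan_syz_small n_gt0 size_a decomp.
apply: bspanD; first exact: span_small ah' size_h'.
apply: bspan_sum => i _; apply/bspanZ/span_small; first exact: koszul_syz.
by move=> k; apply: size_koszul.
Qed.
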